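(* Let $U$ be a finite set of cardinality $n\ge1$. There is a bijection between the set $(C\circ\mathcal P)^\bullet[U]$ and the set of pairs $(\mathcal X,\lambda)$ where $\mathcal X$ is an $n$-periodic Ptolemy diagram of the $\infty$-gon all of whose arcs have length at most $n$, and $\lambda$ is a bijection from the set $\mathbb Z/n\mathbb Z$ of residue classes of vertices of the $\infty$-gon modulo $n$ to $U$.
   Context: An arc of the $\infty$-gon is a pair $(i,j)$ of integers with $j-i\ge2$, of length $j-i$; the vertices of the $\infty$-gon are the integers. A collection of arcs is $n$-periodic if it is closed under $(i,j)\mapsto(i+tn,j+tn)$, $t\in\mathbb Z$. Two arcs $(i,j),(k,l)$ cross if $i<k<j<l$ or $k<i<l<j$. A Ptolemy diagram of the $\infty$-gon is a collection $\mathcal X$ of arcs such that whenever $(i,j),(r,s)\in\mathcal X$ cross with $i<r$, each of $(i,r),(i,s),(r,j),(j,s)$ which is an arc lies in $\mathcal X$. For $N\ge 3$, a Ptolemy diagram of a convex $N$-gon is a set of diagonals such that whenever two diagonals in it cross, all diagonals among their four endpoints belong to it. A Ptolemy diagram with distinguished base edge on the $(N+1)$-gon, $N\ge1$, is a Ptolemy diagram of the $(N+1)$-gon together with a chosen edge (for $N=1$: the degenerate diagram consisting of two vertices and one edge); the base vertex is the first vertex of the base edge going counterclockwise. For a finite set $V$ with $|V|=N$, $\mathcal P[V]$ is the set of Ptolemy diagrams with distinguished base edge on the $(N+1)$-gon whose non-base vertices are labelled bijectively by $V$. $(C\circ\mathcal P)[U]$ is the set of cyclically ordered tuples $(P_1,\dots,P_r)$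 (up to cyclic rotation) where $U=V_1\sqcup\dots\sqcup V_r$ is a set partition into nonempty blocks and $P_s\in\mathcal P[V_s]$. The pointed version $(C\circ\mathcal P)^\bullet[U]$ is the set of pairs $(\gamma,u)$ with $\gamma\in(C\circ\mathcal P)[U]$ and $u\in U$. *)

From HB Require Import structures.
From Stdlib Require List.
From mathcomp Require Import all_boot all_order all_algebra.
Set Implicit Arguments. Unset Strict Implicit. Unset Printing Implicit Defensive.
Import Order.TTheory GRing.Theory Num.Theory.

(* The (N+1)-gon has vertices 0,1,...,N in counterclockwise order; vertex 0 is
   the base vertex and the base edge is {0,1}.  The non-base vertices 1..N carry
   the labels.  Edges are {k,k+1} and {0,N}; a diagonal is written (x,y), x<y. *)
Definition is_diag (N x y : nat) : bool :=
  [&& x < y, x.+2 <= y & ~~ ((x == 0) && (y == N))].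

Definition crossn (a b c d : nat) : bool :=
  [&& a < c, c < b & b < d] || [&& c < a, a < d & d < b].

Definition ptolemy_poly (N : nat) (D : {set 'I_N.+1 * 'I_N.+1}) : Prop :=
  (forall p, p \in D -> is_diag N p.1 p.2) /\
  (forall p q, p \in D -> q \in D -> crossn p.1 p.2 q.1 q.2 ->
     forall x y : 'I_N.+1,
       x \in [:: p.1; p.2; q.1; q.2] -> y \in [:: p.1; p.2; q.1; q.2] ->
       is_diag N x y -> (x, y) \in D).

(* A block (V, P) with P in P[V]: N = |V| >= 1, the labels of vertices 1..N
   (a duplicate-free N-tuple whose underlying set is V), and the diagram. *)
Record PBlock (U : finType) := PBlockMk {
  pb_size : nat;
  pb_lab : pb_size.-tuple U;
  pb_diag : {set 'I_pb_size.+1 * 'I_pb_size.+1} }.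

Definition pblock_valid (U : finType) (b : PBlock U) : Prop :=
  [/\ 0 < pb_size b, uniq (pb_lab b) & ptolemy_poly (pb_diag b)].

(* Representatives of (C o P)^bullet[U]: a sequence of blocks (the cyclic order)
   whose label sets partition U, together with a point u in U. *)
Definition cp_valid (U : finType) (c : seq (PBlock U) * U) : Prop :=
  (forall b, List.In b c.1 -> pblock_valid b) /\
  perm_eq (flatten [seq val (pb_lab b) | b <- c.1]) (enum U).

Definition CPrep (U : finType) := {c : seq (PBlock U) * U | cp_valid c}.

(* Two representatives define the same element of (C o P)^bullet[U] iff they
   have the same point and the cyclic tuples differ by a rotation. *)
Definition cp_equiv (U : finType) (x y : CPrep U) : Prop :=
  (proj1_sig x).2 = (proj1_sig y).2 /\ exists k, rot k (proj1_sig x).1 = (proj1_sig y).1.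

Local Open Scope ring_scope.

Definition is_arc (i j : int) : bool := 2 <= j - i.

Definition crossz (i j k l : int) : bool :=
  [&& i < k, k < j & j < l] || [&& k < i, i < l & l < j].

Definition arc_collection (X : int -> int -> bool) : Prop :=
  forall i j, X i j -> is_arc i j.

Definition ptolemy_inf (X : int -> int -> bool) : Prop :=
  arc_collection X /\
  (forall i j r s, X i j -> X r s -> crossz i j r s -> i < r ->
     [/\ is_arc i r -> X i r, is_arc i s -> X i s,
         is_arc r j -> X r j & is_arc j s -> X j s]).

Definition periodic (n : nat) (X : int -> int -> bool) : Prop :=
  forall i j t : int, X (i + t * n%:Z) (j + t * n%:Z) = X i j.

Definition arcs_bounded (n : nat) (X : int -> int -> bool) : Prop :=
  forall i j, X i j -> j - i <= n%:Z.

Definition InfDiagram (n : nat) :=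
  {X : int -> int -> bool | [/\ ptolemy_inf X, periodic n X & arcs_bounded n X]}.

(* Residue classes Z/nZ are represented by 'I_n (class of i is i mod n). *)
Definition ResLabelling (U : finType) (n : nat) :=
  {f : {ffun 'I_n -> U} | bijective f}.

From mathcomp Require Import all_boot all_order all_algebra.
From mathcomp Require Import zify.
From Stdlib Require Import Classical_Prop FunctionalExtensionality.
Set Implicit Arguments. Unset Strict Implicit. Unset Printing Implicit Defensive.
Import Order.TTheory GRing.Theory Num.Theory.

(* Gluing the blocks
   side by side, a block of size N occupying the vertices o, ..., o + N, gives a
   linear diagram on 0..n whose arcs are the diagonals and the base edges of the
   blocks; repeating it with period n gives an n-periodic Ptolemy diagram of the
   infinity-gon with arcs of length at most n, and reading the labels along the
   vertices gives a bijection Z/nZ -> U, normalised so that u labels the class 0. *)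

Section LinearDiagrams.
Variable U : finType.
Implicit Types (s : seq (PBlock U)) (Y : nat -> nat -> bool) (lab : nat -> U).

Definition in_block (b : PBlock U) (x y : nat) : bool :=
  [exists p in pb_diag b, (nat_of_ord p.1 == x) && (nat_of_ord p.2 == y)].

(* The linear diagram of a sequence of blocks: the blocks are glued side by side
   on the vertices 0..total_size s, block number k occupying an interval [o, o + N];
   its arcs are the diagonals of the blocks together with the base edge (o, o + N)
   of every block of size N >= 2. *)
Fixpoint lin_arcs s (a b : nat) : bool :=
  if s is blk :: s' then
    [&& a < b, b <= pb_size blk & in_block blk a b || [&& a == 0, b == pb_size blk & 1 < pb_size blk]]
    || ((pb_size blk <= a) && lin_arcs s' (a - pb_size blk) (b - pb_size blk))
  else false.

Definition total_size s := sumn [seq pb_size b | b <- s].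

Definition labels s := flatten [seq val (pb_lab b) | b <- s].

(* Conversely, a relation Y on 0..W is cut at v when no arc of Y passes over v;
   the blocks of Y are the pieces between consecutive cuts. *)
Definition is_cut Y W v := [forall a : 'I_v, forall b : 'I_W.+1, (v < b) ==> ~~ Y a b].

Lemma is_cutP Y W v : reflect (forall a b, a < v -> v < b -> b <= W -> ~~ Y a b) (is_cut Y W v).
Proof.
apply: (iffP idP).
- move=> /forallP H a b ha hb hW. have := H (Ordinal ha) => /forallP /(_ (Ordinal (hW : b < W.+1))).
  by rewrite /= hb.
- move=> H; apply/forallP => a; apply/forallP => b; apply/implyP => hb.
  by apply: H => //; rewrite -ltnS.
Qed.

Lemma not_cut Y W v : ~~ is_cut Y W v -> exists a b, [/\ a < v, v < b, b <= W & Y a b].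
Proof.
move/forallPn => [a /forallPn [b]]; rewrite negb_imply negbK => /andP[hb hY].
by exists a, b; split => //; rewrite -ltnS.
Qed.

Lemma is_cut0 Y W : is_cut Y W 0.
Proof. by apply/is_cutP. Qed.

Lemma is_cut_end Y W : is_cut Y W W.
Proof. by apply/is_cutP => a b _ h1 h2; move: (leq_ltn_trans h2 h1); rewrite ltnn. Qed.

Lemma is_cut_ext Y Y' W v : (forall a b, a < b <= W -> Y a b = Y' a b) -> is_cut Y W v = is_cut Y' W v.
Proof.
move=> H; apply/is_cutP/is_cutP => HH a b h1 h2 h3.
- by rewrite -H ?HH //; lia.
- by rewrite H ?HH //; lia.
Qed.

Lemma is_cut_restr Y W w v : w <= W -> is_cut Y W v -> is_cut Y w v.
Proof. move=> hw /is_cutP H; apply/is_cutP => a b h1 h2 h3; apply: H => //; lia. Qed.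

Definition first_cut Y W := (find (fun i => is_cut Y W i.+1) (iota 0 W)).+1.

Lemma first_cut_spec Y W : 0 < W ->
  [/\ 0 < first_cut Y W, first_cut Y W <= W, is_cut Y W (first_cut Y W) &
      forall v, 0 < v -> v < first_cut Y W -> ~~ is_cut Y W v].
Proof.
move=> W0.
have hh : has (fun i => is_cut Y W i.+1) (iota 0 W).
  apply/hasP; exists W.-1; first by rewrite mem_iota add0n; lia.
  by rewrite prednK //; apply: is_cut_end.
have hf : find (fun i => is_cut Y W i.+1) (iota 0 W) < W.
  by move: hh; rewrite has_find size_iota.
split => //.
- have := nth_find 0 hh. by rewrite nth_iota.
- move=> v v0 vlt. rewrite /first_cut in vlt.
  have hv : v.-1 < find (fun i => is_cut Y W i.+1) (iota 0 W) by lia.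
  have := before_find 0 hv.
  rewrite nth_iota; last by lia.
  by rewrite add0n prednK // => ->.
Qed.

Lemma first_cut_unique Y W m : 0 < m -> m <= W -> is_cut Y W m ->
  (forall v, 0 < v -> v < m -> ~~ is_cut Y W v) -> first_cut Y W = m.
Proof.
move=> m0 mW cm hm.
have [h1 h2 h3 h4] := first_cut_spec Y (leq_trans m0 mW).
case: (ltngtP (first_cut Y W) m) => // h.
- by move: (hm _ h1 h); rewrite h3.
- by move: (h4 _ m0 h); rewrite cm.
Qed.

Lemma first_cut_ext Y Y' W : (forall a b, a < b <= W -> Y a b = Y' a b) -> first_cut Y W = first_cut Y' W.
Proof.
move=> H; rewrite /first_cut; congr S; apply: eq_in_find => i _; exact: is_cut_ext.
Qed.

Lemma first_cut_restr Y W w : 0 < w -> w <= W -> is_cut Y W w -> first_cut Y w = first_cut Y W.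
Proof.
move=> w0 wW cw.
have [k0 kW ck hk] := first_cut_spec Y (leq_trans w0 wW).
have kw : first_cut Y W <= w.
  rewrite leqNgt; apply/negP => h; by move: (hk _ w0 h); rewrite cw.
apply: first_cut_unique => //; first exact: is_cut_restr ck.
move=> v v0 vk; have := hk _ v0 vk => /not_cut [a [b [h1 h2 h3 h4]]].
apply/negP => /is_cutP H.
case: (leqP b w) => hb; first by move: (H a b h1 h2 hb); rewrite h4.
move/is_cutP: cw => /(_ a b) C; suff : ~~ Y a b by rewrite h4.
by apply: C; lia.
Qed.

Definition shift_rel Y k := fun a b => Y (a + k) (b + k).
Definition shift_lab lab k := fun i => lab (i + k).

Definition block_of Y lab k : PBlock U :=
  @PBlockMk U k (@Tuple k U (mkseq lab k) (introT eqP (size_mkseq lab k)))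
    [set p : 'I_k.+1 * 'I_k.+1 | is_diag k p.1 p.2 && Y p.1 p.2].

Fixpoint split_fuel (fuel : nat) Y lab W : seq (PBlock U) :=
  if fuel is f.+1 then
    if W is 0 then [::] else
    block_of Y lab (first_cut Y W)
      :: split_fuel f (shift_rel Y (first_cut Y W)) (shift_lab lab (first_cut Y W)) (W - first_cut Y W)
  else [::].

(* W blocks at most are needed, so fuel W suffices. *)
Definition split_blocks Y lab W := split_fuel W Y lab W.

Lemma split_fuel_enough f1 f2 Y lab W : W <= f1 -> W <= f2 -> split_fuel f1 Y lab W = split_fuel f2 Y lab W.
Proof.
elim: f1 f2 Y lab W => [|f1 IH] [|f2] Y lab W /=; try by case: W.
case: W => // W h1 h2. have [k0 _ _ _] := first_cut_spec Y (ltn0Sn W).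
congr cons; apply: IH; lia.
Qed.

Lemma split_blocks_unfold Y lab W : 0 < W ->
  split_blocks Y lab W = block_of Y lab (first_cut Y W)
    :: split_blocks (shift_rel Y (first_cut Y W)) (shift_lab lab (first_cut Y W)) (W - first_cut Y W).
Proof.
rewrite /split_blocks; case: W => // W _ /=; congr cons; apply: split_fuel_enough => //.
have [k0 _ _ _] := first_cut_spec Y (ltn0Sn W); lia.
Qed.

Lemma block_of_ext Y Y' lab lab' k : (forall x y, x < y <= k -> Y x y = Y' x y) ->
  (forall i, i < k -> lab i = lab' i) -> block_of Y lab k = block_of Y' lab' k.
Proof.
move=> HY HL; rewrite /block_of.
have E1 : mkseq lab k = mkseq lab' k.
  by apply/eq_in_map => i; rewrite mem_iota => /andP[_ h]; apply: HL.
have E2 : [set p : 'I_k.+1 * 'I_k.+1 | is_diag k p.1 p.2 && Y p.1 p.2] =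
          [set p : 'I_k.+1 * 'I_k.+1 | is_diag k p.1 p.2 && Y' p.1 p.2].
  apply/setP => -[x y]; rewrite !inE /=; case hd: (is_diag k x y) => //=.
  apply: HY; move: hd; rewrite /is_diag => /andP[-> _] /=; rewrite -ltnS; exact: ltn_ord.
rewrite E2; congr PBlockMk; exact: val_inj.
Qed.

Lemma split_fuel_ext f Y Y' lab lab' W : W <= f -> (forall a b, a < b <= W -> Y a b = Y' a b) ->
  (forall i, i < W -> lab i = lab' i) -> split_fuel f Y lab W = split_fuel f Y' lab' W.
Proof.
elim: f Y Y' lab lab' W => [|f IH] Y Y' lab lab' W hW HY HL /=; first by [].
case: W hW HY HL => // W hW HY HL.
rewrite (first_cut_ext HY).
have [k0 kW _ _] := first_cut_spec Y' (ltn0Sn W).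
congr cons.
- apply: block_of_ext => [x y h|i h]; [apply: HY|apply: HL]; lia.
- apply: IH => [|a b h|i h]; rewrite /shift_rel /shift_lab; [lia|apply: HY|apply: HL]; lia.
Qed.

Lemma split_blocks_ext Y Y' lab lab' W : (forall a b, a < b <= W -> Y a b = Y' a b) ->
  (forall i, i < W -> lab i = lab' i) -> split_blocks Y lab W = split_blocks Y' lab' W.
Proof. by move=> *; apply: split_fuel_ext. Qed.

Lemma split_blocks_cat W w Y lab : w <= W -> is_cut Y W w ->
  split_blocks Y lab W = split_blocks Y lab w ++ split_blocks (shift_rel Y w) (shift_lab lab w) (W - w).
Proof.
move: {2}W (leqnn W) => m hm; elim: m W hm w Y lab => [|m IH] W hm w Y lab hw cw.
  have -> : W = 0 by lia. have -> : w = 0 by lia. by [].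
case: (posnP w) => w0.
  subst w; rewrite /= subn0; apply: split_blocks_ext => [a b h|i h]; by rewrite /shift_rel /shift_lab !addn0.
rewrite (split_blocks_unfold _ _ (leq_trans w0 hw)) (split_blocks_unfold _ _ w0) (first_cut_restr w0 hw cw) /=.
have [k0 kW ck hk] := first_cut_spec Y (leq_trans w0 hw).
have kw : first_cut Y W <= w.
  rewrite leqNgt; apply/negP => h; by move: (hk _ w0 h); rewrite cw.
set k := first_cut Y W in k0 kW ck hk kw *.
congr cons.
rewrite (IH (W - k) _ (w - k)); first last.
- apply/is_cutP => a b h1 h2 h3; rewrite /shift_rel; move/is_cutP: cw; apply; lia.
- lia.
- lia.
congr cat; have -> : W - k - (w - k) = W - w by lia.
apply: split_blocks_ext => [a b h|i h]; rewrite /shift_rel /shift_lab; by rewrite -!addnA subnK.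
Qed.

Lemma in_block_of Y lab k a b : a <= k -> b <= k -> in_block (block_of Y lab k) a b = is_diag k a b && Y a b.
Proof.
move=> ha hb; apply/existsP/idP.
- by move=> [p /andP[]]; rewrite inE => /andP[h1 h2] /andP[/eqP e1 /eqP e2]; rewrite -e1 -e2 h1 h2.
- move=> h; exists (inord a, inord b); rewrite inE /= !inordK //; by rewrite !eqxx h.
Qed.

Definition lin_arc Y W := forall a b, a < b <= W -> Y a b -> a.+1 < b.
Definition lin_ptolemy Y (W : nat) := forall i r j l : nat, i < r -> r < j -> j < l -> l <= W -> Y i j -> Y r l ->
  forall x y, x \in [:: i; j; r; l] -> y \in [:: i; j; r; l] -> x.+1 < y -> Y x y.

Lemma four_points (P : nat -> nat -> Prop) (i r j l : nat) : i < r -> r < j -> j < l ->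
  P i j -> P r l -> (i.+1 < r -> P i r) -> P i l -> (r.+1 < j -> P r j) -> (j.+1 < l -> P j l) ->
  forall x y, x \in [:: i; j; r; l] -> y \in [:: i; j; r; l] -> x.+1 < y -> P x y.
Proof.
move=> h1 h2 h3 p1 p2 p3 p4 p5 p6 x y; rewrite !inE.
move=> /or4P [] /eqP -> /or4P [] /eqP -> h; try (exfalso; lia); auto.
Qed.

Lemma lin_shift Y W k : k <= W -> lin_arc Y W -> lin_ptolemy Y W ->
  lin_arc (shift_rel Y k) (W - k) /\ lin_ptolemy (shift_rel Y k) (W - k).
Proof.
move=> kW ha hp; split.
- move=> a b h; rewrite /shift_rel => /ha; lia.
- move=> i r j l h1 h2 h3 h4 y1 y2 x y hx hy hxy; rewrite /shift_rel.
  apply: (hp (i + k) (r + k) (j + k) (l + k)) => //; try lia.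
  + exact: (map_f (addn^~ k) hx).
  + exact: (map_f (addn^~ k) hy).
Qed.

(* Key geometric fact: for a linear Ptolemy relation, the first block of size
   k >= 2 is closed, i.e. (0, k) is related.  Following a chain of arcs from 0,
   the Ptolemy condition lets one extend an arc (0, q) with q < k to an arc
   (0, q') with q < q' <= k. *)
Lemma first_cut_closed W Y : lin_arc Y W -> lin_ptolemy Y W -> 0 < W -> 1 < first_cut Y W ->
  Y 0 (first_cut Y W).
Proof.
move=> ha hp W0 k1.
have [k0 kW ck hk] := first_cut_spec Y W0.
set k := first_cut Y W in k0 kW ck hk k1 *.
have [a [b [h1 h2 h3 h4]]] := not_cut (hk 1 isT k1).
have a0 : a = 0 by lia. subst a.
have bk : b <= k.
  rewrite leqNgt; apply/negP => h; move/is_cutP: ck => /(_ 0 b k0 h h3); by rewrite h4.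
move: {2}(k - b) (leqnn (k - b)) => m; elim: m b h2 h3 h4 bk => [|m IH] q h2 h3 h4 bk hm.
  by have -> : k = q by lia.
case: (ltngtP q k) => hq; last by rewrite hq in h4.
- have /not_cut [p' [q' [e1 e2 e3 e4]]] := hk q (ltnW h2) hq.
  have q'k : q' <= k.
    rewrite leqNgt; apply/negP => h; move/is_cutP: ck => /(_ p' q' (ltn_trans e1 hq) h e3); by rewrite e4.
  case: (posnP p') => hp'.
  + subst p'; apply: (IH q') => //; lia.
  + apply: (IH q') => //; try lia.
    apply: (hp 0 p' q q') => //; rewrite ?inE ?eqxx ?orbT //; lia.
- lia.
Qed.

Lemma lin_arcs_split W Y lab : lin_arc Y W -> lin_ptolemy Y W ->
  forall a b, a < b <= W -> lin_arcs (split_blocks Y lab W) a b = Y a b.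
Proof.
move: {2}W (leqnn W) => m hm; elim: m W hm Y lab => [|m IH] W hm Y lab ha hp a b hab; first by lia.
have W0 : 0 < W by lia.
rewrite split_blocks_unfold //=.
have [k0 kW ck hk] := first_cut_spec Y W0.
set k := first_cut Y W in k0 kW ck hk *.
case: (leqP b k) => hbk.
- have -> : (k <= a) = false by apply/negbTE; rewrite -ltnNge; lia.
  rewrite andFb orbF in_block_of //; last lia.
  have hab' := hab; case/andP: hab' => hab1 _; rewrite hab1 /=.
  case hd : (is_diag k a b) => /=.
    case: (Y a b) => /=; first by []; move: hd; rewrite /is_diag => /and3P[_ _]; by case: (a == 0); case: (b == k).
  case: (boolP ((a == 0) && (b == k))) => [/andP[/eqP -> /eqP ->]|hn] /=.
    rewrite eqxx; case: (ltnP 1 k) => h1 /=; first by rewrite first_cut_closed.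
    apply/esym/negbTE/negP => hy; have := ha 0 k _ hy; rewrite k0 kW => /(_ isT); lia.
  rewrite andbA (negbTE hn) /=; apply/esym/negbTE/negP => hy.
  have := ha a b hab hy => hab2; move: hd; rewrite /is_diag.
  rewrite hab1 hab2 /= => /negbFE; by rewrite (negbTE hn).
- rewrite andFb andbF /=; case: (leqP k a) => hka /=.
  + have [ha' hp'] := lin_shift kW ha hp.
    rewrite IH //; [by rewrite /shift_rel !subnK //; lia|lia|lia].
  + apply/esym/negbTE; move/is_cutP: ck; apply => //; lia.
Qed.

Lemma total_size_labels s : total_size s = size (labels s).
Proof. elim: s => //= b s IH; rewrite size_cat size_tuple; congr addn; exact: IH. Qed.

Lemma total_size_cat s1 s2 : total_size (s1 ++ s2) = total_size s1 + total_size s2.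
Proof. by rewrite /total_size map_cat sumn_cat. Qed.

Lemma labels_cat s1 s2 : labels (s1 ++ s2) = labels s1 ++ labels s2.
Proof. by rewrite /labels map_cat flatten_cat. Qed.

Lemma lin_arcs_bound s a b : lin_arcs s a b -> a < b <= total_size s.
Proof.
elim: s a b => // blk s IH a b; rewrite /total_size /= => /orP[/and3P[h1 h2 _]|/andP[h1 /IH]].
- by rewrite h1 /= (leq_trans h2) // leq_addr.
- rewrite /total_size; lia.
Qed.

Lemma lin_arcs_cat s1 s2 a b : lin_arcs (s1 ++ s2) a b =
  lin_arcs s1 a b || (total_size s1 <= a) && lin_arcs s2 (a - total_size s1) (b - total_size s1).
Proof.
elim: s1 a b => [|blk s1 IH] a b /=; first by rewrite !subn0.
rewrite IH -orbA; congr orb.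
rewrite /total_size /=; case: (leqP (pb_size blk) a) => h /=.
  congr orb; rewrite !subnDA; congr andb; lia.
by have -> : (pb_size blk + sumn [seq pb_size b | b <- s1] <= a) = false by apply/negbTE; rewrite -ltnNge; lia.
Qed.

Lemma lin_arcs_cut_take s k : is_cut (lin_arcs s) (total_size s) (total_size (take k s)).
Proof.
have hcat := cat_take_drop k s; set s1 := take k s in hcat *; set s2 := drop k s in hcat.
apply/is_cutP => a b h1 h2 h3; rewrite -hcat lin_arcs_cat.
by apply/negP => /orP[/lin_arcs_bound|/andP[]]; lia.
Qed.

Definition block_ok (b : PBlock U) := 0 < pb_size b /\ ptolemy_poly (pb_diag b).

Lemma in_blockP (b : PBlock U) (x y : 'I_(pb_size b).+1) : in_block b x y = ((x, y) \in pb_diag b).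
Proof.
apply/existsP/idP => [[p /andP[pin /andP[/eqP e1 /eqP e2]]]|h]; last by exists (x, y); rewrite h !eqxx.
have -> : (x, y) = p by case: p pin e1 e2 => p1 p2 /= _ e1 e2; congr pair; apply: val_inj.
exact: pin.
Qed.

Lemma in_block_diag (b : PBlock U) x y : ptolemy_poly (pb_diag b) -> in_block b x y -> is_diag (pb_size b) x y.
Proof.
move=> [H1 _] /existsP [p /and3P[pin /eqP e1 /eqP e2]]; subst x y; exact: (H1 p pin).
Qed.

Lemma in_block_ptolemy (b : PBlock U) i r j l x y : ptolemy_poly (pb_diag b) -> i < r -> r < j -> j < l ->
  in_block b i j -> in_block b r l -> x \in [:: i; j; r; l] -> y \in [:: i; j; r; l] ->
  is_diag (pb_size b) x y -> in_block b x y.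
Proof.
move=> [_ H2] h1 h2 h3 /existsP [p /andP[pin /andP[/eqP ep1 /eqP ep2]]]
  /existsP [q /andP[qin /andP[/eqP eq1 /eqP eq2]]].
subst i j r l => hx hy hd.
have: x \in map val [:: p.1; p.2; q.1; q.2] by [].
case/mapP => X hX ex; subst x.
have: y \in map val [:: p.1; p.2; q.1; q.2] by [].
case/mapP => Y hY eY; subst y.
rewrite in_blockP; apply: (H2 p q) => //.
by rewrite /crossn h1 h2 h3.
Qed.

Lemma lin_arcs_arc s a b : (forall b, List.In b s -> block_ok b) -> lin_arcs s a b -> a.+1 < b.
Proof.
elim: s a b => //= blk s IH a b hv
  /orP[/and3P[h1 h2 /orP[/(in_block_diag (proj2 (hv _ (or_introl erefl))))|/and3P[/eqP -> /eqP -> h]]]|/andP[h1 /IH]].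
- by rewrite /is_diag => /and3P[].
- by [].
- move=> H; have := H (fun b hb => hv b (or_intror hb)); lia.
Qed.

(* The linear diagram of valid blocks is Ptolemy: two crossing arcs always lie
   in the same block, whose own Ptolemy condition applies. *)
Lemma lin_arcs_ptolemy s W : (forall b, List.In b s -> block_ok b) -> lin_ptolemy (lin_arcs s) W.
Proof.
elim: s W => [|blk s IH] W hv i r j l h1 h2 h3 h4 //=.
have [k0 hpt] := hv _ (or_introl erefl).
have hv' : forall b, List.In b s -> block_ok b by move=> b hb; apply: hv; right.
set k := pb_size blk in k0 *.
move=> /orP[/and3P[_ hjk hij]|/andP[hki hij]] /orP[/and3P[_ hlk hrl]|/andP[hkr hrl]] x y hx hy hxy.
- have xk : x <= k by move: hx; rewrite !inE => /or4P[] /eqP ->; lia.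
  have yk : y <= k by move: hy; rewrite !inE => /or4P[] /eqP ->; lia.
  have dij : in_block blk i j by case/orP: hij => // /and3P[_ /eqP]; lia.
  have drl : in_block blk r l by case/orP: hrl => // /and3P[/eqP]; lia.
  apply/orP; left; rewrite yk (_ : x < y) /=; last lia.
  case hd: (is_diag k x y); first by rewrite (in_block_ptolemy hpt h1 h2 h3 dij drl hx hy hd).
  move: hd; rewrite /is_diag; have -> : x < y by lia. have -> : x.+2 <= y by lia.
  rewrite /= => /negbFE /andP[/eqP -> /eqP ->]; rewrite !eqxx /=; lia.
- lia.
- lia.
- have xk : k <= x by move: hx; rewrite !inE => /or4P[] /eqP ->; lia.
  have yk : k <= y by move: hy; rewrite !inE => /or4P[] /eqP ->; lia.
  apply/orP; right; rewrite xk /=.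
  apply: (IH W hv' (i - k) (r - k) (j - k) (l - k)) => //; try lia.
  + exact: (map_f (subn^~ k) hx).
  + exact: (map_f (subn^~ k) hy).
Qed.

Lemma block_of_eq (b : PBlock U) Y lab : ptolemy_poly (pb_diag b) ->
  (forall x y, x < y <= pb_size b -> is_diag (pb_size b) x y -> Y x y = in_block b x y) ->
  mkseq lab (pb_size b) = val (pb_lab b) -> block_of Y lab (pb_size b) = b.
Proof.
case: b => k L D /= [H1 _] HY HL; rewrite /block_of.
have -> : [set p : 'I_k.+1 * 'I_k.+1 | is_diag k p.1 p.2 && Y p.1 p.2] = D.
  apply/setP => -[x y]; rewrite inE /=.
  case hd: (is_diag k x y) => /=.
  - rewrite HY //; last by move: hd; rewrite /is_diag => /and3P[-> _ _]; rewrite -ltnS ltn_ord.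
    exact: (@in_blockP (PBlockMk L D) x y).
  - by apply/esym/negbTE/negP => /H1 /=; rewrite hd.
congr PBlockMk; exact: val_inj.
Qed.

Lemma mkseqD (f : nat -> U) m k : mkseq f (m + k) = mkseq f m ++ mkseq (fun i => f (i + m)) k.
Proof.
apply: (@eq_from_nth _ (f 0)); first by rewrite size_cat !size_mkseq.
move=> i; rewrite size_mkseq => hi; rewrite nth_cat size_mkseq nth_mkseq //.
case: (ltnP i m) => h; first by rewrite nth_mkseq.
rewrite nth_mkseq ?subnK //; lia.
Qed.

Lemma labels_split Y lab W : labels (split_blocks Y lab W) = mkseq lab W.
Proof.
move: {2}W (leqnn W) => m hm; elim: m W hm Y lab => [|m IH] W hm Y lab.
  by have -> : W = 0 by lia.
case: (posnP W) => W0; first by subst W.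
rewrite split_blocks_unfold //.
have [k0 kW _ _] := first_cut_spec Y W0.
set k := first_cut Y W in k0 kW *.
have -> : labels (block_of Y lab k :: split_blocks (shift_rel Y k) (shift_lab lab k) (W - k))
  = mkseq lab k ++ labels (split_blocks (shift_rel Y k) (shift_lab lab k) (W - k)) by [].
by rewrite IH -?mkseqD ?subnKC //; lia.
Qed.

Lemma total_size_split Y lab W : total_size (split_blocks Y lab W) = W.
Proof. by rewrite total_size_labels labels_split size_mkseq. Qed.

Lemma split_blocks_valid Y lab W : lin_arc Y W -> lin_ptolemy Y W -> {in gtn W &, injective lab} ->
  forall b, List.In b (split_blocks Y lab W) -> pblock_valid b.
Proof.
move: {2}W (leqnn W) => m hm; elim: m W hm Y lab => [|m IH] W hm Y lab ha hp hl b.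
  by have -> : W = 0 by lia.
case: (posnP W) => W0; first by subst W.
rewrite split_blocks_unfold //.
have [k0 kW _ _] := first_cut_spec Y W0.
set k := first_cut Y W in k0 kW *.
move=> /= [<-|hb]; last first.
  have [ha' hp'] := lin_shift kW ha hp.
  apply: (IH (W - k)) hb => //; first lia.
  move=> x y; rewrite !inE /shift_lab => hx hy /hl; rewrite !inE => /(_ _ _) e.
  have := e ltac:(lia) ltac:(lia); lia.
split; first exact: k0.
- have -> : val (pb_lab (block_of Y lab k)) = mkseq lab k by [].
  rewrite /mkseq map_inj_in_uniq ?iota_uniq // => x y; rewrite !mem_iota !add0n => /andP[_ hx] /andP[_ hy].
  apply: hl; rewrite inE; lia.
- split => [p|p q]; first by rewrite !inE => /andP[].
  rewrite !inE => /andP[dp yp] /andP[dq yq] hc x y hx hy hd.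
  rewrite inE hd /=.
  have hxy : x.+1 < y by move: hd; rewrite /is_diag => /and3P[].
  have pk : p.2 <= k by rewrite -ltnS ltn_ord.
  have qk : q.2 <= k by rewrite -ltnS ltn_ord.
  have hx' := map_f val hx; have hy' := map_f val hy; rewrite /= in hx' hy'.
  case/orP: hc => /and3P[c1 c2 c3].
  + apply: (hp p.1 q.1 p.2 q.2) => //; lia.
  + apply: (hp q.1 p.1 q.2 p.2) => //; try lia.
    * by move: hx'; rewrite !inE; case/or4P => ->; rewrite ?orbT.
    * by move: hy'; rewrite !inE; case/or4P => ->; rewrite ?orbT.
Qed.

Lemma split_lin_arcs s u : (forall b, List.In b s -> block_ok b) ->
  split_blocks (lin_arcs s) (nth u (labels s)) (total_size s) = s.
Proof.
elim: s => [|blk s IH] hv //=.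
have [k0 hpt] := hv _ (or_introl erefl).
have hv' : forall b, List.In b s -> block_ok b by move=> b hb; apply: hv; right.
set k := pb_size blk in k0 *.
rewrite split_blocks_unfold /total_size /= -/(total_size s); last by rewrite -/k; lia.
have hk : first_cut (lin_arcs (blk :: s)) (k + total_size s) = k.
  apply: first_cut_unique => //; first by rewrite leq_addr.
  - apply/is_cutP => a b h1 h2 h3 /=; apply/negP => /orP[/and3P[_ hb _]|/andP[ha _]]; lia.
  - move=> v v0 vk; apply/negP => /is_cutP /(_ 0 k v0 vk (leq_addr _ _)) /=.
    by rewrite /= -/k k0 leqnn eqxx /= (leq_ltn_trans v0 vk) orbT.
rewrite hk; congr cons.
- apply: block_of_eq => //.
  + move=> x y /andP[hxy hy] hd /=; rewrite hxy hy -/k /=.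
    rewrite (_ : k <= x = false) ?orbF; last by apply/negbTE; rewrite -ltnNge; lia.
    move: hd; rewrite /is_diag -/k => /and3P[_ _]; case: (x == 0) => /=; case: (y == k) => /=; by rewrite ?orbF.
  + rewrite /labels /=; apply: (@eq_from_nth _ u); first by rewrite size_mkseq size_tuple.
    move=> i; rewrite size_mkseq => hi; rewrite nth_mkseq // nth_cat size_tuple -/k hi //.
- rewrite addKn; rewrite -[RHS](IH hv'); apply: split_blocks_ext => [a b hab|i hi].
  + rewrite /shift_rel /= (_ : a + k < b + k) /=; last lia.
    rewrite (_ : b + k <= k = false) /=; last by apply/negbTE; rewrite -ltnNge; lia.
    by rewrite leq_addl !addnK.
  + by rewrite /shift_lab /labels /= nth_cat size_tuple -/k (_ : i + k < k = false) ?addnK //; apply/negbTE; rewrite -ltnNge; lia.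
Qed.

End LinearDiagrams.

Local Open Scope ring_scope.

Section Residues.
Variable n : nat.

Lemma euclid_unique (a a' : nat) (t t' : int) : (a < n)%N -> (a' < n)%N ->
  a%:Z + t * n%:Z = a'%:Z + t' * n%:Z -> a = a' /\ t = t'.
Proof.
move=> ha ha' h.
have ht : t = t'.
  case: (ltrgtP t t') => // htt.
  - have H0 : 0 <= t' - t - 1 by lia. have := mulr_ge0 H0 (ler0n _ n). nia.
  - have H0 : 0 <= t - t' - 1 by lia. have := mulr_ge0 H0 (ler0n _ n). nia.
subst t'; split => //; lia.
Qed.

Hypothesis hn : (0 < n)%N.

Definition res (z : int) : nat := `|(z %% n%:Z)%Z|%N.

Lemma res_ge z : 0 <= (z %% n%:Z)%Z.
Proof. by apply: modz_ge0; rewrite eqz_nat; lia. Qed.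

Lemma res_lt z : (res z < n)%N.
Proof.
have := ltz_pmod z (_ : 0 < n%:Z); rewrite /res -(gez0_abs (res_ge z)) ltz_nat; apply; lia.
Qed.

Lemma res_eq z : z = (res z)%:Z + (z %/ n%:Z)%Z * n%:Z.
Proof. by rewrite /res gez0_abs ?res_ge // addrC -divz_eq. Qed.

Lemma res_uniq z (a : nat) t : (a < n)%N -> z = a%:Z + t * n%:Z -> res z = a.
Proof.
move=> ha hz; have := res_eq z; rewrite {1}hz => /esym /euclid_unique.
by case/(_ (res_lt z) ha).
Qed.

Lemma res_shift z t : res (z + t * n%:Z) = res z.
Proof.
apply: (res_uniq (t := divz z n%:Z + t) (res_lt z)).
by rewrite {1}(res_eq z) mulrDl addrA.
Qed.

Lemma res_natmod (m : nat) : res m%:Z = (m %% n)%N.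
Proof.
apply: (res_uniq (t := (m %/ n)%N%:Z)); first by rewrite ltn_pmod.
by rewrite {1}(divn_eq m n) PoszD PoszM addrC.
Qed.

End Residues.

Section PeriodicDiagrams.
Variable U : finType.
Variable n : nat.
Hypothesis hn : (0 < n)%N.
Implicit Types (s : seq (PBlock U)) (X : int -> int -> bool) (lam : {ffun 'I_n -> U}).

(* The n-periodic diagram of the infinity-gon obtained by repeating the linear
   diagram of s, placed so that its vertex 0 sits at e. *)
Definition periodize s (e : int) : int -> int -> bool := fun i j =>
  (i < j) && lin_arcs s (res n (i - e)) (res n (i - e) + `|j - i|)%N.

Lemma periodize_elim s e i j : total_size s = n -> periodize s e i j ->
  exists (a : nat) (t : int) (d : nat),
    [/\ i = e + a%:Z + t * n%:Z, j = i + d%:Z, (a < n)%N, (a + d <= n)%N & lin_arcs s a (a + d)].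
Proof.
move=> hs /andP[hij hX]; have hb := lin_arcs_bound hX; have E := res_eq hn (i - e).
exists (res n (i - e)), ((i - e) %/ n%:Z)%Z, `|j - i|%N; split => //; lia.
Qed.

Lemma periodize_intro s e (a b : nat) t : total_size s = n -> lin_arcs s a b ->
  periodize s e (e + a%:Z + t * n%:Z) (e + b%:Z + t * n%:Z).
Proof.
move=> hs h; have hb := lin_arcs_bound h; apply/andP; split; first lia.
have -> : res n (e + a%:Z + t * n%:Z - e) = a by apply: (res_uniq hn (t := t)); lia.
have -> : e + b%:Z + t * n%:Z - (e + a%:Z + t * n%:Z) = (b - a)%N%:Z by lia.
by rewrite /= subnKC //; lia.
Qed.

Lemma periodize_periodic s e : periodic n (periodize s e).
Proof.
move=> i j t; rewrite /periodize ltrD2r.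
have -> : i + t * n%:Z - e = i - e + t * n%:Z by lia.
have -> : j + t * n%:Z - (i + t * n%:Z) = j - i by lia.
by rewrite res_shift.
Qed.

Lemma periodize_bounded s e : total_size s = n -> arcs_bounded n (periodize s e).
Proof. by move=> hs i j /(periodize_elim hs) [a [t [d [h1 h2 h3 h4 h5]]]]; lia. Qed.

(* The Ptolemy condition of the infinity-gon reduces to the linear one: two
   crossing arcs of bounded length lie in one translate of the linear diagram. *)
Lemma periodize_ptolemy s e : total_size s = n -> (forall b, List.In b s -> block_ok b) ->
  ptolemy_inf (periodize s e).
Proof.
move=> hs hv; split.
  move=> i j /(periodize_elim hs) [a [t [d [h1 h2 h3 h4 h5]]]].
  have := lin_arcs_arc hv h5; rewrite /is_arc; lia.
move=> i j r l Xij Xrl hc hir.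
have {hc} [c1 c2 c3] : [/\ i < r, r < j & j < l].
  by move: hc; rewrite /crossz => /orP[/and3P[]|/and3P[]] //; lia.
have [a [t [d [e1 e2 a1 a2 a3]]]] := periodize_elim hs Xij.
have [a' [t' [d' [f1 f2 b1 b2 b3]]]] := periodize_elim hs Xrl.
set dr := absz (r - i).
have edr : r = i + dr%:Z by rewrite /dr gez0_abs; lia.
have [ea _] : a' = (a + dr)%N /\ t' = t.
  apply: (euclid_unique (n := n)) => //; first lia.
  have : e + a'%:Z + t' * n%:Z = e + (a + dr)%N%:Z + t * n%:Z by lia.
  lia.
subst a'.
have hpt := lin_arcs_ptolemy (W := n) hv.
have Hx : forall x y : nat, x \in [:: a; a + d; a + dr; a + dr + d']%N ->
    y \in [:: a; a + d; a + dr; a + dr + d']%N ->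
   (x.+1 < y)%N -> periodize s e (e + x%:Z + t * n%:Z) (e + y%:Z + t * n%:Z).
  move=> x y hx hy hxy; apply: periodize_intro => //.
  apply: (hpt a (a + dr) (a + d) (a + dr + d'))%N => //; lia.
rewrite /is_arc; split => harc.
- have -> : r = e + (a + dr)%N%:Z + t * n%:Z by lia.
  rewrite e1; apply: Hx; rewrite ?inE ?eqxx ?orbT //; lia.
- have -> : l = e + (a + dr + d')%N%:Z + t * n%:Z by lia.
  rewrite e1; apply: Hx; rewrite ?inE ?eqxx ?orbT //; lia.
- have -> : r = e + (a + dr)%N%:Z + t * n%:Z by lia.
  have -> : j = e + (a + d)%N%:Z + t * n%:Z by lia.
  apply: Hx; rewrite ?inE ?eqxx ?orbT //; lia.
- have -> : l = e + (a + dr + d')%N%:Z + t * n%:Z by lia.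
  have -> : j = e + (a + d)%N%:Z + t * n%:Z by lia.
  apply: Hx; rewrite ?inE ?eqxx ?orbT //; lia.
Qed.

Definition res0 : 'I_n := Ordinal hn.

Definition label_at lam (z : int) : U := lam (Ordinal (res_lt hn z)).

Lemma label_at_shift lam z t : label_at lam (z + t * n%:Z) = label_at lam z.
Proof. by rewrite /label_at; congr (lam _); apply: val_inj; rewrite /= res_shift. Qed.

(* The labelling of residues read off from the label sequence F, normalised so
   that the class 0 is labelled by the point u; base_point s u is the vertex
   at which the linear diagram of s must be placed to be compatible with it. *)
Definition labelling_of (F : seq U) (u : U) : {ffun 'I_n -> U} :=
  [ffun r : 'I_n => nth u F ((r + index u F) %% n)].

Definition base_point s (u : U) : int := - (index u (labels s))%:Z - 1.

Lemma labelling_of_inj F u : uniq F -> size F = n -> injective (labelling_of F u).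
Proof.
move=> uF sF r r'; rewrite !ffunE => /eqP; rewrite nth_uniq ?sF ?ltn_pmod // => /eqP h.
apply: val_inj; move: h => /eqP; rewrite eqn_modDr => /eqP.
by rewrite !modn_small.
Qed.

Lemma labelling_of_res0 F u : u \in F -> size F = n -> labelling_of F u res0 = u.
Proof.
move=> uF sF; rewrite ffunE /= add0n modn_small ?nth_index // -sF index_mem //.
Qed.

Definition uncrossed X (c : int) : Prop := forall p q, X p q -> ~ (p < c < q).

Definition window X (c : int) : nat -> nat -> bool := fun a b => X (c + a%:Z) (c + b%:Z).

Definition window_labels lam (c : int) : nat -> U := fun i => label_at lam (c + 1 + i%:Z).

Definition cut_open X lam c := split_blocks (window X c) (window_labels lam c) n.

Definition inf_ok X := [/\ ptolemy_inf X, periodic n X & arcs_bounded n X].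

(* Every periodic Ptolemy diagram with arcs of length at most n has an uncrossed
   vertex: otherwise, the Ptolemy condition would produce arcs of any length. *)
Lemma uncrossed_exists X : inf_ok X -> exists c, uncrossed X c.
Proof.
move=> [[ha hp] hP hB].
apply: NNPP => hno.
have ncut : forall c, exists p q, X p q /\ p < c < q.
  move=> c; apply: NNPP => h; apply: hno; exists c => p q hX hpq; apply: h; by exists p, q.
suff : forall L : nat, exists p q, X p q /\ (L%:Z <= q - p).
  move=> /(_ n.+1) [p [q [hX hL]]]; have := hB _ _ hX; lia.
elim => [|L [p [q [hX hL]]]].
- have [p [q [hX _]]] := ncut 0; exists p, q; split => //; have := ha _ _ hX; rewrite /is_arc; lia.
- have [p' [q' [hX' /andP[h1 h2]]]] := ncut p.
  case: (lerP q q') => hqq.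
  + exists p', q'; split => //; lia.
  + have hc : crossz p' q' p q by rewrite /crossz; apply/orP; left; apply/and3P; split; lia.
    have [_ H _ _] := hp _ _ _ _ hX' hX hc h1.
    exists p', q; split; last lia. apply: H; have := ha _ _ hX; rewrite /is_arc; lia.
Qed.

Lemma uncrossed_shift X c t : periodic n X -> uncrossed X c -> uncrossed X (c + t * n%:Z).
Proof.
move=> hP hc p q hX /andP[c1 c2]; apply: (hc (p + (- t) * n%:Z) (q + (- t) * n%:Z)).
- by rewrite hP.
- apply/andP; split; lia.
Qed.

Lemma uncrossed_is_cut X c (d W : nat) : uncrossed X (c + d%:Z) -> is_cut (window X c) W d.
Proof.
move=> hc; apply/is_cutP => a b h1 h2 h3; apply/negP => hX; apply: (hc _ _ hX).
apply/andP; split; lia.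
Qed.

Lemma window_ptolemy X c : ptolemy_inf X -> lin_arc (window X c) n /\ lin_ptolemy (window X c) n.
Proof.
move=> [ha hp]; split.
- move=> a b _ /ha; rewrite /is_arc; lia.
- move=> i r j l h1 h2 h3 h4 Yij Yrl.
  have hc : crossz (c + i%:Z) (c + j%:Z) (c + r%:Z) (c + l%:Z).
    by rewrite /crossz; apply/orP; left; apply/and3P; split; lia.
  have hlt : c + i%:Z < c + r%:Z by lia.
  have [q1 q2 q3 q4] := hp _ _ _ _ Yij Yrl hc hlt.
  apply: four_points => //; rewrite /window; try move=> h;
    [apply: q1|apply: q2|apply: q3|apply: q4]; rewrite /is_arc; lia.
Qed.

Lemma window_labels_hit lam c (r : 'I_n) : exists i, (i < n)%N /\ window_labels lam c i = lam r.
Proof.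
exists (res n (r%:Z - c - 1)); split; first exact: res_lt.
rewrite /window_labels /label_at; congr (lam _); apply: val_inj => /=.
have E := res_eq hn (r%:Z - c - 1).
apply: (res_uniq hn (t := - divz (r%:Z - c - 1) n%:Z)); first exact: ltn_ord.
move: E; set i := res n _; set q := divz _ _; lia.
Qed.

Lemma window_labels_inj lam c : injective lam -> {in gtn n &, injective (window_labels lam c)}.
Proof.
move=> hl i j; rewrite !inE => hi hj; rewrite /window_labels /label_at => /hl /(congr1 val) /= h.
have E1 := res_eq hn (c + 1 + i%:Z); have E2 := res_eq hn (c + 1 + j%:Z).
rewrite h in E1.
have [] := euclid_unique (n := n) (a := i) (a' := j)
  (t := - divz (c + 1 + i%:Z) n%:Z) (t' := - divz (c + 1 + j%:Z) n%:Z) hi hj; last by [].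
move: E1 E2; set r := res n _; set q1 := divz _ _; set q2 := divz _ _; lia.
Qed.

Lemma cut_open_labels X lam c : labels (cut_open X lam c) = mkseq (window_labels lam c) n.
Proof. exact: labels_split. Qed.

Lemma cut_open_shift X lam c t : periodic n X -> cut_open X lam (c + t * n%:Z) = cut_open X lam c.
Proof.
move=> hP; apply: split_blocks_ext => [a b _|i _]; rewrite /window /window_labels.
- have -> : c + t * n%:Z + a%:Z = c + a%:Z + t * n%:Z by lia.
  have -> : c + t * n%:Z + b%:Z = c + b%:Z + t * n%:Z by lia.
  by rewrite hP.
- have -> : c + t * n%:Z + 1 + i%:Z = c + 1 + i%:Z + t * n%:Z by lia.
  by rewrite label_at_shift.
Qed.

Lemma cut_open_rot X lam c (d : nat) : periodic n X -> uncrossed X c -> uncrossed X (c + d%:Z) -> (d <= n)%N ->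
  exists B, cut_open X lam c = split_blocks (window X c) (window_labels lam c) d ++ B /\
            cut_open X lam (c + d%:Z) = B ++ split_blocks (window X c) (window_labels lam c) d.
Proof.
move=> hP hc hcd hd.
exists (split_blocks (window X (c + d%:Z)) (window_labels lam (c + d%:Z)) (n - d)); split.
- rewrite /cut_open (split_blocks_cat _ hd (@uncrossed_is_cut X c d n hcd)); congr cat.
  apply: split_blocks_ext => [a b _|i _]; rewrite /shift_rel /shift_lab /window /window_labels.
  + by f_equal; lia.
  + by rewrite PoszD; congr label_at; lia.
- have hn' : (n - d <= n)%N by lia.
  have hcn : uncrossed X (c + d%:Z + (n - d)%N%:Z).
    have -> : c + d%:Z + (n - d)%N%:Z = c + 1 * n%:Z by lia.
    exact: uncrossed_shift.
  rewrite /cut_open (split_blocks_cat _ hn' (@uncrossed_is_cut X (c + d%:Z) (n - d) n hcn)).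
  rewrite (_ : n - (n - d) = d)%N; last lia.
  congr cat; apply: split_blocks_ext => [a b _|i _]; rewrite /shift_rel /shift_lab /window /window_labels.
  + have -> : c + d%:Z + (a + (n - d))%N%:Z = c + a%:Z + 1 * n%:Z by lia.
    have -> : c + d%:Z + (b + (n - d))%N%:Z = c + b%:Z + 1 * n%:Z by lia.
    by rewrite hP.
  + have -> : c + d%:Z + 1 + (i + (n - d))%N%:Z = c + 1 + i%:Z + 1 * n%:Z by lia.
    by rewrite label_at_shift.
Qed.

Lemma cut_open_rotation X lam c c' : periodic n X -> uncrossed X c -> uncrossed X c' ->
  exists k, rot k (cut_open X lam c) = cut_open X lam c'.
Proof.
move=> hP hc hc'.
have Ed := res_eq hn (c' - c).
set d := res n _ in Ed; set T := divz _ _ in Ed.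
have ec' : c' = c + d%:Z + T * n%:Z by lia.
have hcd : uncrossed X (c + d%:Z).
  have := uncrossed_shift (t := - T) hP hc'; rewrite ec'.
  by have -> : c + d%:Z + T * n%:Z + - T * n%:Z = c + d%:Z by lia.
have [B [h1 h2]] := cut_open_rot lam hP hc hcd (ltnW (res_lt hn _)).
exists (size (split_blocks (window X c) (window_labels lam c) d)).
by rewrite h1 rot_size_cat ec' cut_open_shift // h2.
Qed.

End PeriodicDiagrams.

Lemma sig_eq (A : Type) (P : A -> Prop) (a b : {z : A | P z}) : sval a = sval b -> a = b.
Proof. by apply: eq_sig_hprop => z p q; apply: proof_irrelevance. Qed.

Section Representatives.
Variable U : finType.
Variable n : nat.
Hypothesis hn : (0 < n)%N.
Implicit Types (s : seq (PBlock U)) (X : int -> int -> bool) (lam : {ffun 'I_n -> U}).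

Definition rep_ok s (u : U) :=
  [/\ forall b, List.In b s -> block_ok b, total_size s = n, uniq (labels s) & u \in labels s].

Lemma cp_valid_rep_ok (c : seq (PBlock U) * U) : #|U| = n -> cp_valid c -> rep_ok c.1 c.2.
Proof.
case: c => s u hU [H1 H2] /=; split.
- by move=> b /H1 [h1 _ h3].
- by rewrite total_size_labels (perm_size H2) -cardE hU.
- by rewrite (perm_uniq H2) enum_uniq.
- by rewrite (perm_mem H2) mem_enum.
Qed.

Lemma window_periodize s e a b : total_size s = n -> (a < b <= n)%N ->
  window (periodize n s e) e a b = lin_arcs s a b.
Proof.
move=> hs hab; rewrite /window; apply/idP/idP.
- move/(periodize_elim hn hs) => [a' [t [d [h1 h2 h3 h4 h5]]]].
  have [ea et] : a = a' /\ 0 = t.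
    by apply: (euclid_unique (n := n)); try lia; rewrite mul0r addr0; lia.
  subst a' t; have -> : b = (a + d)%N by lia. exact: h5.
- by move=> h; have := periodize_intro hn e 0 hs h; rewrite mul0r !addr0.
Qed.

Lemma window_labels_of s u i : size (labels s) = n -> (i < n)%N ->
  window_labels hn (labelling_of n (labels s) u) (base_point s u) i = nth u (labels s) i.
Proof.
move=> hs hi; rewrite /window_labels /label_at ffunE /=; congr nth.
set off := index u (labels s).
have E := res_eq hn (base_point s u + 1 + i%:Z).
rewrite -(res_natmod hn); apply: (res_uniq hn (t := - divz (base_point s u + 1 + i%:Z) n%:Z)) => //.
move: E; rewrite /base_point -/off PoszD. set r := res n _. set q := divz _ _. lia.
Qed.

Lemma cut_open_periodize s u : rep_ok s u ->
  cut_open hn (periodize n s (base_point s u)) (labelling_of n (labels s) u) (base_point s u) = s.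
Proof.
move=> [hv hs _ _]; rewrite /cut_open -[RHS](split_lin_arcs u hv) hs.
apply: split_blocks_ext => [a b hab|i hi].
- exact: window_periodize.
- by apply: window_labels_of; rewrite // -total_size_labels.
Qed.

Lemma periodize_uncrossed s e (w : nat) : total_size s = n -> (w <= n)%N -> is_cut (lin_arcs s) n w ->
  uncrossed (periodize n s e) (e + w%:Z).
Proof.
move=> hs hw /is_cutP hc p q /(periodize_elim hn hs) [a [t [d [h1 h2 h3 h4 h5]]]] /andP[c1 c2].
case: (ltrgtP t 0) => ht.
- have H0 : 0 <= - t - 1 by lia. have := mulr_ge0 H0 (ler0n _ n). nia.
- have H0 : 0 <= t - 1 by lia. have := mulr_ge0 H0 (ler0n _ n). nia.
- subst t; suff : ~~ lin_arcs s a (a + d) by rewrite h5. apply: hc => //; lia.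
Qed.

Lemma base_point_uncrossed s u : rep_ok s u ->
  uncrossed (periodize n s (base_point s u)) (base_point s u).
Proof.
move=> [_ hs _ _]; have := periodize_uncrossed (e := base_point s u) hs (leq0n n) (is_cut0 _ _).
by rewrite addr0.
Qed.

Lemma rot_cut_open s u k : rep_ok s u ->
  rot k s = cut_open hn (periodize n s (base_point s u)) (labelling_of n (labels s) u)
                     (base_point s u + (total_size (take k s))%:Z).
Proof.
move=> hrep; have [hv hs _ _] := hrep; set e := base_point s u.
set X := periodize n s e; set lam := labelling_of n (labels s) u.
set s1 := take k s; set s2 := drop k s.
have hcat : s = s1 ++ s2 by rewrite cat_take_drop.
have hv1 : forall b, List.In b s1 -> block_ok b.
  by move=> b hb; apply: hv; rewrite hcat; apply: List.in_or_app; left.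
set w := total_size s1.
have hw : (w <= n)%N by rewrite -hs hcat total_size_cat leq_addr.
have cw : is_cut (lin_arcs s) n w by rewrite -hs; exact: lin_arcs_cut_take.
have cxw : uncrossed X (e + w%:Z) := periodize_uncrossed (e := e) hs hw cw.
have [B [h1 h2]] := cut_open_rot hn lam (periodize_periodic hn s e) (base_point_uncrossed hrep) cxw hw.
have hA : split_blocks (window X e) (window_labels hn lam e) w = s1.
  rewrite -[RHS](split_lin_arcs u hv1); apply: split_blocks_ext => [a b hab|i hi].
  - rewrite window_periodize //; last lia.
    rewrite hcat lin_arcs_cat; case: (lin_arcs s1 a b) => //=.
    by apply/negbTE; rewrite negb_and -ltnNge -/w; lia.
  - rewrite window_labels_of -?total_size_labels //; last lia.
    by rewrite hcat labels_cat nth_cat -total_size_labels -/w hi.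
have hB : B = s2.
  have := congr1 (drop (size s1)) (etrans (esym (cut_open_periodize hrep)) h1).
  by rewrite hA drop_size_cat // => <-; rewrite {1}hcat drop_size_cat.
by rewrite h2 hA hB.
Qed.

Lemma cut_open_index X lam c : injective lam ->
  exists2 q : int, (index (lam (res0 hn)) (labels (cut_open hn X lam c)) < n)%N &
    c + 1 + (index (lam (res0 hn)) (labels (cut_open hn X lam c)))%:Z = q * n%:Z.
Proof.
move=> hl; set u := lam (res0 hn).
have [i0 [hi0 e0]] := window_labels_hit hn lam c (res0 hn).
have uL : uniq (mkseq (window_labels hn lam c) n).
  rewrite map_inj_in_uniq ?iota_uniq // => x y; rewrite !mem_iota !add0n => /andP[_ ?] /andP[_ ?].
  by apply: window_labels_inj.
have -> : index u (labels (cut_open hn X lam c)) = i0.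
  by rewrite cut_open_labels /u -e0 -(nth_mkseq u _ hi0) index_uniq // size_mkseq.
exists (divz (c + 1 + i0%:Z) n%:Z) => //.
move: e0; rewrite /window_labels /label_at => /hl /(congr1 val) /= h0.
by rewrite {1}(res_eq hn (c + 1 + i0%:Z)) h0 add0r.
Qed.

Hypothesis hU : #|U| = n.

Lemma cut_open_valid X lam c u : ptolemy_inf X -> bijective lam -> cp_valid (cut_open hn X lam c, u).
Proof.
move=> hX hbij; have [hla hlp] := window_ptolemy hn c hX.
have hinj := window_labels_inj (c := c) (bij_inj hbij).
split; first exact: split_blocks_valid.
change (perm_eq (labels (cut_open hn X lam c)) (enum U)); rewrite cut_open_labels.
apply: uniq_perm; [|exact: enum_uniq|].
- rewrite map_inj_in_uniq ?iota_uniq // => x y.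
  by rewrite !mem_iota !add0n => /andP[_ ?] /andP[_ ?]; apply: hinj.
- move=> y; rewrite mem_enum; case: hbij => g _ hg.
  have [i [hi ei]] := window_labels_hit hn lam c (g y).
  by apply/mapP; exists i; rewrite ?mem_iota ?add0n // ei hg.
Qed.

Lemma periodize_cut_open X lam c : inf_ok n X -> injective lam -> uncrossed X c ->
  periodize n (cut_open hn X lam c) (base_point (cut_open hn X lam c) (lam (res0 hn))) =2 X.
Proof.
move=> [hX hP hB] hl hc i j.
have [q hq0 hq] := cut_open_index X c hl.
set s := cut_open hn X lam c in hq0 hq *.
have eE : base_point s (lam (res0 hn)) = c - q * n%:Z by rewrite /base_point; lia.
have szs : total_size s = n by rewrite total_size_split.
have [ha hp] := window_ptolemy hn c hX.
have hXl : forall a b, (a < b <= n)%N -> lin_arcs s a b = X (c + a%:Z) (c + b%:Z).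
  by move=> a b hab; rewrite /s /cut_open lin_arcs_split.
rewrite eE; apply/idP/idP.
- move/(periodize_elim hn szs) => [a [t [d [h1 h2 h3 h4 h5]]]].
  have := lin_arcs_bound h5 => hab; rewrite hXl // in h5; last lia.
  have -> : i = c + a%:Z + (t - q) * n%:Z by lia.
  have -> : j = c + (a + d)%N%:Z + (t - q) * n%:Z by lia.
  by rewrite hP.
- move=> hXij; have := hX.1 _ _ hXij; rewrite /is_arc => harc.
  set d := absz (j - i).
  have Ei := res_eq hn (i - (c - q * n%:Z)).
  set a := res n _ in Ei; set T := divz _ _ in Ei.
  have ha' : (a < n)%N by exact: res_lt.
  have Ei' : i = c + a%:Z + (T - q) * n%:Z by lia.
  have Ej' : j = c + (a + d)%N%:Z + (T - q) * n%:Z by rewrite /d; lia.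
  have Xa : X (c + a%:Z) (c + (a + d)%N%:Z) by rewrite -(hP _ _ (T - q)) -Ei' -Ej'.
  have had : (a + d <= n)%N.
    rewrite leqNgt; apply/negP => hbad.
    apply: (uncrossed_shift hn (t := 1) hP hc Xa); apply/andP; split; lia.
  have -> : i = c - q * n%:Z + a%:Z + T * n%:Z by lia.
  have -> : j = c - q * n%:Z + (a + d)%N%:Z + T * n%:Z by lia.
  by apply: periodize_intro => //; rewrite hXl //; lia.
Qed.

Lemma labelling_cut_open X lam c : injective lam ->
  labelling_of n (labels (cut_open hn X lam c)) (lam (res0 hn)) = lam.
Proof.
move=> hl; have [q hq0 hq] := cut_open_index X c hl.
set i0 := index _ _ in hq0 hq *.
apply/ffunP => r; rewrite ffunE -/i0 cut_open_labels nth_mkseq ?ltn_pmod //.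
rewrite /window_labels /label_at; congr (lam _); apply: val_inj => /=.
apply: (res_uniq hn (t := q - ((r + i0) %/ n)%N%:Z)); first exact: ltn_ord.
have := divn_eq (r + i0) n.
set m := ((r + i0) %/ n)%N; set k := ((r + i0) %% n)%N. nia.
Qed.

Definition rep_diagram (x : CPrep U) : int -> int -> bool :=
  periodize n (sval x).1 (base_point (sval x).1 (sval x).2).

Definition rep_labelling (x : CPrep U) : {ffun 'I_n -> U} :=
  labelling_of n (labels (sval x).1) (sval x).2.

Lemma rep_ok_of (x : CPrep U) : rep_ok (sval x).1 (sval x).2.
Proof. exact: cp_valid_rep_ok hU (svalP x). Qed.

Lemma rep_diagram_ok x : inf_ok n (rep_diagram x).
Proof.
have [hv hs _ _] := rep_ok_of x.
split; [exact: periodize_ptolemy|exact: periodize_periodic|exact: periodize_bounded].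
Qed.

Lemma rep_labelling_bij x : bijective (rep_labelling x).
Proof.
have [_ hs hu _] := rep_ok_of x.
apply: inj_card_bij; first by apply: labelling_of_inj => //; rewrite -total_size_labels.
by rewrite card_ord hU.
Qed.

Definition rep_map (x : CPrep U) : InfDiagram n * ResLabelling U n :=
  (exist _ (rep_diagram x) (rep_diagram_ok x), exist _ (rep_labelling x) (rep_labelling_bij x)).

Lemma rep_map_eq x y : rep_map x = rep_map y <->
  rep_diagram x = rep_diagram y /\ rep_labelling x = rep_labelling y.
Proof.
split => [h|[h1 h2]].
- by split; [exact: (congr1 (fun p => sval p.1) h)|exact: (congr1 (fun p => sval p.2) h)].
- by congr pair; apply: sig_eq.
Qed.

Lemma rep_of_cut_open (x : CPrep U) X lam c : inf_ok n X -> bijective lam -> uncrossed X c ->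
  (sval x).1 = cut_open hn X lam c -> (sval x).2 = lam (res0 hn) ->
  rep_diagram x = X /\ rep_labelling x = lam.
Proof.
move=> hX hb hc e1 e2; split.
- apply: functional_extensionality => i; apply: functional_extensionality => j.
  by rewrite /rep_diagram e1 e2 periodize_cut_open //; exact: bij_inj.
- by rewrite /rep_labelling e1 e2 labelling_cut_open //; exact: bij_inj.
Qed.

Lemma rep_map_surj z : exists x, rep_map x = z.
Proof.
case: z => [[X hX] [lam hl]].
have [c hc] := uncrossed_exists hn hX; have [hXp _ _] := hX.
pose x : CPrep U := exist _ (cut_open hn X lam c, lam (res0 hn)) (cut_open_valid c _ hXp hl).
have [e1 e2] := rep_of_cut_open (x := x) hX hl hc erefl erefl.
by exists x; congr pair; apply: sig_eq.
Qed.

Lemma rep_map_rot (x y : CPrep U) : cp_equiv x y ->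
  rep_diagram x = rep_diagram y /\ rep_labelling x = rep_labelling y.
Proof.
move=> [eu [k hk]]; have hrep := rep_ok_of x; have [_ hs _ hm] := hrep.
set sx := (sval x).1 in hs hm *; set e := base_point sx (sval x).2.
have hw : (total_size (take k sx) <= n)%N.
  by rewrite -hs -{2}(cat_take_drop k sx) total_size_cat leq_addr.
have cw : is_cut (lin_arcs sx) n (total_size (take k sx)) by rewrite -hs; exact: lin_arcs_cut_take.
have hc : uncrossed (rep_diagram x) (e + (total_size (take k sx))%:Z) := periodize_uncrossed hs hw cw.
have ey1 : (sval y).1 = cut_open hn (rep_diagram x) (rep_labelling x) (e + (total_size (take k sx))%:Z).
  by rewrite -hk; exact: rot_cut_open.
have ey2 : (sval y).2 = rep_labelling x (res0 hn).
  by rewrite -eu /rep_labelling labelling_of_res0 // -total_size_labels.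
have [h1 h2] := rep_of_cut_open (rep_diagram_ok x) (rep_labelling_bij x) hc ey1 ey2.
by rewrite h1 h2.
Qed.

(* Conversely, representatives with the same image differ by a rotation: both
   are openings of the same diagram at uncrossed vertices. *)
Lemma rep_map_injective (x y : CPrep U) :
  rep_diagram x = rep_diagram y -> rep_labelling x = rep_labelling y -> cp_equiv x y.
Proof.
move=> hX hL; have hx := rep_ok_of x; have hy := rep_ok_of y.
have [_ hsx _ hmx] := hx; have [_ hsy _ hmy] := hy.
have eu : (sval x).2 = (sval y).2.
  have e1 : rep_labelling x (res0 hn) = (sval x).2.
    by apply: labelling_of_res0 => //; rewrite -total_size_labels.
  have e2 : rep_labelling y (res0 hn) = (sval y).2.
    by apply: labelling_of_res0 => //; rewrite -total_size_labels.
  by rewrite -e1 -e2 hL.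
split => //.
have cy : uncrossed (rep_diagram x) (base_point (sval y).1 (sval y).2).
  by rewrite hX; exact: base_point_uncrossed.
have [k hk] := cut_open_rotation hn (rep_labelling x) (periodize_periodic hn _ _) (base_point_uncrossed hx) cy.
have Gy : cut_open hn (rep_diagram x) (rep_labelling x) (base_point (sval y).1 (sval y).2) = (sval y).1.
  by rewrite hX hL; exact: cut_open_periodize.
exists k; rewrite -Gy -hk; congr rot; exact: esym (cut_open_periodize hx).
Qed.

End Representatives.

Local Close Scope ring_scope.

Theorem mainTheorem8 (U : finType) (n : nat) (hn : 1 <= n) (hU : #|U| = n) :
  exists f : CPrep U -> InfDiagram n * ResLabelling U n,
    (forall x y : CPrep U, f x = f y <-> cp_equiv x y) /\
    (forall z, exists x, f x = z).
Proof.
exists (rep_map hn hU); split; last exact: rep_map_surj.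
move=> x y; rewrite rep_map_eq; split => [[hX hL]|hxy].
- exact (rep_map_injective hn hU hX hL).
- exact (rep_map_rot hn hU hxy).
Qed.
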